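(* Fix a contact vector $\mathsf V\in\mathbb Z^n$ and a stable weighted dual graph $\mathsf G$ of genus $g$ with $n$ legs, with moduli cone $\sigma_{\mathsf G}=\mathbb R_{\ge0}^{E(\mathsf G)}$. Then the closure of the set of points of $\sigma_{\mathsf G}$ that lie in $\mathsf{DR}_g(\mathsf V)^{\mathrm{trop}}_{\#}$ and have a fixed rubber combinatorial type is a simplicial cone.
   Context: A point $p$ in the interior of $\sigma_{\mathsf G}$ gives a tropical curve $\Gamma_p$ (metric realization of $\mathsf G$ with edge lengths from $p$ and infinite legs). A balanced function with slopes $\mathsf V$ on it is a continuous function to $\mathbb R$, linear with integer slope on edges, with outgoing slopes summing to $0$ at every vertex, and slope $\mathsf V_j$ along leg $j$; it is unique up to additive constant if it exists. $\mathsf{DR}_g(\mathsf V)^{\mathrm{trop}}_{\#}\subset\mathcal M^{\mathrm{trop}}_{g,n}$ is the closure of the locus of tropical curves admitting such a function. For such $p$ and function $F$: the target graph $T$ is the subdivision of $\mathbb R$ with vertices at images of vertices of $\Gamma_p$; the semistable source graph $\Gamma$ is obtained by subdividing $\Gamma_p$ at preimages of the vertices of $T$ (new vertices of genus $0$); the rubber combinatorial type is the data of $\Gamma$, $T$, the graph map $\Gamma\to T$, and the slopes on edges and legs of $\Gamma$. *)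

From HB Require Import structures.
From mathcomp Require Import all_boot all_order all_algebra.
From mathcomp Require Import all_classical all_reals all_analysis.
Set Implicit Arguments. Unset Strict Implicit. Unset Printing Implicit Defensive.
Import Order.TTheory GRing.Theory Num.Theory.
Import numFieldNormedType.Exports.
Local Open Scope ring_scope.
Local Open Scope classical_set_scope.

(* A weighted dual graph G with n legs:
   - vertices: a finite type V, with genus weights gw : V -> nat;
   - edges: labelled by 'I_m (so sigma_G = R_{>=0}^{E(G)} sits in 'rV[R]_m);
     edge e goes from [src e] to [tgt e] (an arbitrary fixed orientation;
     loops allowed when src e = tgt e);
   - legs: 'I_n, leg j attached at vertex [leg j]. *)

Section Graphs.
Variables (V : finType) (m n : nat).
Variables (src tgt : 'I_m -> V) (leg : 'I_n -> V).

Definition valence (v : V) : nat :=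
  (#|[set e | src e == v]| + #|[set e | tgt e == v]| + #|[set j | leg j == v]|)%N.

Definition adjacent : rel V :=
  fun u w => [exists e, ((src e == u) && (tgt e == w)) || ((src e == w) && (tgt e == u))].

(* stable weighted dual graph of genus g with n legs:
   nonempty, connected, 2 g(v) - 2 + val(v) > 0 at every vertex,
   and g = b_1(G) + sum_v g(v) = |E| - |V| + 1 + sum_v g(v). *)
Definition stable_graph (g : nat) (gw : V -> nat) : Prop :=
  [/\ (0 < #|V|)%N,
      (forall u w, connect adjacent u w),
      (forall v, 2 < 2 * gw v + valence v)%N
    & (g + #|V| = m + 1 + \sum_(v : V) gw v)%N].

Variable R : realType.

Definition interior_pt (p : 'rV[R]_m) : Prop := forall e, 0 < p 0 e.

(* A balanced function with slopes Vc on the tropical curve Gamma_p.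
   Such a function (continuous, linear with integer slope on each edge and
   leg) is encoded by its values F on the vertices and its integer slopes s
   on the edges (slope along e oriented src e -> tgt e); on leg j it is
   F(leg j) + Vc j * t. *)
Definition balanced (Vc : 'I_n -> int) (p : 'rV[R]_m) (F : V -> R) (s : 'I_m -> int) : Prop :=
  (forall e, F (tgt e) - F (src e) = (s e)%:~R * p 0 e) /\
  (forall v, (\sum_(e | src e == v) s e) - (\sum_(e | tgt e == v) s e)
             + (\sum_(j | leg j == v) Vc j) = 0).

(* Level of a vertex: index of the vertex F(v) of the target graph T
   (vertices of T = images of vertices of Gamma_p, ordered along R). *)
Definition level (F : V -> R) (v : V) : nat :=
  size (undup [seq F w | w <- enum V & F w < F v]).

(* Rubber combinatorial type, relative to the fixed labelling of G.
   The data (Gamma, T, Gamma -> T, slopes) are determined by, and determine,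
   the pair (level function on V(G), slope on each edge of G): T has vertices
   0 < 1 < ... < max level, Gamma subdivides edge e at the levels strictly
   between the levels of its endpoints, and each piece of e has slope s e. *)
Definition rubber_type := ((V -> nat) * ('I_m -> int))%type.

(* p lies in the interior of sigma_G, Gamma_p admits a balanced function with
   slopes Vc (i.e. p is in DR_g(Vc)^trop_#), and its rubber type is tau. *)
Definition DR_type_locus (Vc : 'I_n -> int) (tau : rubber_type) : set 'rV[R]_m :=
  [set p | interior_pt p /\
     exists F s, balanced Vc p F s /\
       (forall v, level F v = tau.1 v) /\ (forall e, s e = tau.2 e)].

End Graphs.

Definition simplicial_cone (R : realType) (m : nat) (S : set 'rV[R]_m) : Prop :=
  exists (k : nat) (M : 'M[R]_(k, m)), row_free M /\
    S = [set x | exists lam : 'rV[R]_k, (forall i, 0 <= lam 0 i) /\ x = lam *m M].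

From Pilot Require Import Defs.
From HB Require Import structures.
From mathcomp Require Import all_boot all_order all_algebra.
From mathcomp Require Import all_classical all_reals all_analysis.
From mathcomp Require Import lra.
Import Order.TTheory GRing.Theory Num.Theory.
Import numFieldNormedType.Exports.
Local Open Scope ring_scope.
Local Open Scope classical_set_scope.
Set Implicit Arguments. Unset Strict Implicit. Unset Printing Implicit Defensive.

(* Fix a rubber type tau = (t, s) (levels t of the vertices, slopes s of the
   edges) realized at some point p0 of the interior of sigma_G, and let
   K = max t.  A point p of sigma_G of type tau is determined by the K positive
   gaps lam_0, ..., lam_{K-1} between consecutive vertices of the target graph
   and by the lengths of the edges of slope 0: writing Phi(v) for the sum of
   the first t(v) gaps, an edge e with s(e) <> 0 has length
   (Phi(tgt e) - Phi(src e)) / s(e).  This is a linear map x = lam *m M, where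
   the rows of the generator matrix M are linearly independent because G is
   connected, every level 0..K is attained and each slope-0 edge has its own
   coordinate.  The locus contains the image of the open orthant and lies in
   the image of the closed orthant, which is closed; hence its closure is the
   simplicial cone spanned by the rows of M. *)

Section Levels.
Variables (V : finType) (R : realType).
Implicit Types (F G : V -> R) (t : V -> nat).

Lemma mem_values_below F c y :
  (y \in undup [seq F x | x <- enum V & F x < c]) <-> exists x, F x < c /\ y = F x.
Proof.
rewrite mem_undup; split.
  by case/mapP => x; rewrite mem_filter => /andP [h _] ->; exists x.
by case=> x [h ->]; apply: map_f; rewrite mem_filter h mem_enum.
Qed.

Lemma uniq_values_below F u :
  uniq (F u :: undup [seq F x | x <- enum V & F x < F u]).
Proof.
rewrite /= undup_uniq andbT; apply/negP => /mem_values_below [x [h e]].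
by move: h; rewrite -e ltxx.
Qed.

Lemma level_lt F u w : F u < F w -> (level F u < level F w)%N.
Proof.
move=> uw; apply: (leq_trans _ (uniq_leq_size (uniq_values_below F u) _)) => //.
move=> y; rewrite inE => /orP [/eqP ->|]; first by apply/mem_values_below; exists u.
case/mem_values_below => x [h ->]; apply/mem_values_below.
by exists x; split => //; apply: lt_trans uw.
Qed.

Lemma level_ltP F u w : (F u < F w) = (level F u < level F w)%N.
Proof.
case: (ltgtP (F u) (F w)) => h; first by rewrite level_lt.
  by apply/esym/negbTE; rewrite -leqNgt ltnW // level_lt.
by rewrite /level h ltnn.
Qed.

Lemma same_order_eq F t :
  (forall u w, (F u < F w) = (t u < t w)%N) ->
  forall u w, (F u == F w) = (t u == t w).
Proof.
by move=> H u w; rewrite eq_le eqn_leq !leNgt (leqNgt (t u)) (leqNgt (t w)) !H.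
Qed.

Lemma size_undup_map (T A B : eqType) (f : T -> A) (g : T -> B) s :
  (forall x y, (f x == f y) = (g x == g y)) ->
  size (undup (map f s)) = size (undup (map g s)).
Proof.
move=> H; elim: s => //= x s IH.
have -> : (f x \in map f s) = (g x \in map g s).
  by apply/mapP/mapP => -[y ys /eqP e]; exists y => //; apply/eqP; rewrite ?H // -H.
by case: ifP => _ //=; rewrite IH.
Qed.

Lemma level_same_order F G :
  (forall u w, (F u < F w) = (G u < G w)) -> forall v, level F v = level G v.
Proof.
move=> H v; rewrite /level (@eq_filter _ _ (fun x => G x < G v)) => [|x]; last by rewrite H.
by apply: size_undup_map => x y; rewrite !eq_le !leNgt !H.
Qed.

(* The level just below a positive level is attained: it is the level of the
   largest value below. *)
Lemma level_pred F w : (0 < level F w)%N -> exists u, level F u = (level F w).-1.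
Proof.
move=> H; have [x0 h0] : exists x0, F x0 < F w.
  move: H; rewrite /level; case E: (undup _) => [|y s] //= _.
  have : y \in undup [seq F x | x <- enum V & F x < F w] by rewrite E inE eqxx.
  by case/mem_values_below => x [h _]; exists x.
case: (@arg_maxP _ _ V x0 (fun x => F x < F w) F h0) => u hu umax; exists u.
suff P : perm_eq (undup [seq F x | x <- enum V & F x < F w])
                 (F u :: undup [seq F x | x <- enum V & F x < F u]).
  by rewrite /level (perm_size P).
apply: uniq_perm; [exact: undup_uniq | exact: uniq_values_below |] => y; apply/idP/idP.
  case/mem_values_below => x [hx ->]; rewrite inE.
  have : F x <= F u := umax x hx; rewrite le_eqVlt => /predU1P [->|lt]; first by rewrite eqxx.
  by apply/orP; right; apply/mem_values_below; exists x.
rewrite inE => /orP [/eqP ->|]; first by apply/mem_values_below; exists u.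
by case/mem_values_below => x [hx ->]; apply/mem_values_below; exists x; split => //; apply: lt_trans hu.
Qed.

Lemma level_down F w j : (j <= level F w)%N -> exists u, level F u = j.
Proof.
move=> h; have [d] : exists d, level F w = (j + d)%N by exists (level F w - j)%N; rewrite subnKC.
elim: d w {h} => [|d IH] w e; first by exists w; rewrite e addn0.
have [u hu] : exists u, level F u = (level F w).-1 by apply: level_pred; rewrite e addnS.
by apply: (IH u); rewrite hu e addnS.
Qed.

End Levels.

Definition cone (R : realType) k m (M : 'M[R]_(k, m)) : set 'rV[R]_m :=
  [set x | exists lam : 'rV[R]_k, (forall i, 0 <= lam 0 i) /\ x = lam *m M].

Lemma continuous_mulmx_coord (R : realType) m k (A : 'M[R]_(m, k)) i :
  continuous (fun x : 'rV[R]_m => (x *m A) 0 i).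
Proof.
have -> : (fun x : 'rV[R]_m => (x *m A) 0 i) = (fun x => \sum_(j < m) x 0 j * A j i).
  by apply: funext => x; rewrite mxE.
apply: continuous_big; first exact: add_continuous.
move=> j _ x; exact: (@cvgMr_tmp R _ (nbhs x) _ (fun y : 'rV[R]_m => y 0 j) (x 0 j) (A j i)
  (@coord_continuous R 1 m 0 j x)).
Qed.

(* For row-free M, with left inverse B, the cone is cut out by the closed
   conditions x *m B *m M = x and x *m B >= 0. *)
Lemma closed_cone (R : realType) k m (M : 'M[R]_(k, m)) : row_free M -> closed (cone M).
Proof.
case/row_freeP => B MB.
have -> : cone M =
    (\bigcap_(j in [set: 'I_m]) ((fun x : 'rV[R]_m => (x *m (B *m M - 1%:M)) 0 j) @^-1` [set 0]))
    `&` (\bigcap_(i in [set: 'I_k]) ((fun x : 'rV[R]_m => (x *m B) 0 i) @^-1` [set y | 0 <= y])).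
  apply/seteqP; split => x /=.
    case=> lam [lam0 ->]; split => j _ /=.
      by rewrite mulmxBr mulmx1 !mulmxA -(mulmxA lam) MB mulmx1 subrr mxE.
    by rewrite -mulmxA MB mulmx1.
  case=> H1 H2; exists (x *m B); split; first by move=> i; exact: H2.
  have : x *m (B *m M - 1%:M) = 0 by apply/rowP => j; rewrite H1 // mxE.
  by rewrite mulmxBr mulmx1 mulmxA => /eqP; rewrite subr_eq0 => /eqP ->.
apply: closedI; apply: closed_bigI => j _; apply: preimage_closed.
- by move=> x _; exact: continuous_mulmx_coord.
- exact: closed_eq.
- by move=> x _; exact: continuous_mulmx_coord.
- exact: closed_ge.
Qed.

(* A set lying between the image of the open orthant and the cone of a
   row-free matrix has that cone as closure: the cone is closed, and
   lam *m M is the limit of (lam + eps) *m M as eps -> 0+. *)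
Lemma closure_between_cone (R : realType) k m (M : 'M[R]_(k, m)) (L : set 'rV[R]_m) :
  row_free M -> (forall mu : 'rV[R]_k, (forall i, 0 < mu 0 i) -> L (mu *m M)) ->
  L `<=` cone M -> closure L = cone M.
Proof.
move=> Mfree Lpos LC; apply/seteqP; split.
  rewrite [X in _ `<=` X](closure_id _).1; first exact: closureS.
  exact: closed_cone.
move=> x [lam [lam0 ->]] B /nbhs_ballP [e e0 eB].
pose w : 'rV[R]_m := const_mx 1 *m M.
pose eps := e / (`|w| + 1).
have w0 : 0 < `|w| + 1 by rewrite ltr_wpDl.
have eps0 : 0 < eps by rewrite divr_gt0.
exists ((lam + eps *: const_mx 1) *m M); split.
  by apply: Lpos => i; rewrite !mxE mulr1; exact: ltr_wpDl.
apply: eB; rewrite -ball_normE /= mulmxDl opprD addrA subrr sub0r normrN -scalemxAl normrZ.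
by rewrite gtr0_norm // /eps -/w mulrAC ltr_pdivrMr // ltr_pM2l // ltrDl // ltr01.
Qed.

Lemma telescope_prefix (R : realType) (f : nat -> R) K a : (a <= K)%N ->
  \sum_(i < K) (f i.+1 - f i) * (nat_of_bool (i < a)%N)%:R = f a - f 0%N.
Proof.
elim: K a => [|K IH] a; first by rewrite leqn0 => /eqP ->; rewrite big_ord0 subrr.
rewrite big_ord_recr /= leq_eqVlt => /predU1P [->|ha].
  rewrite ltnSn mulr1 (eq_bigr (fun i : 'I_K => (f i.+1 - f i) * (nat_of_bool (i < K)%N)%:R)).
    by rewrite IH //; lra.
  by move=> i _ /=; rewrite ltn_ord ltnS ltnW.
rewrite ltnS in ha; rewrite ltnNge ha /= mulr0 addr0 -(IH a) //.
Qed.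

Section Generators.
Variables (V : finType) (R : realType) (m K : nat).
Variables (src tgt : 'I_m -> V) (t : V -> nat) (s : 'I_m -> int).
Implicit Types (lam : 'rV[R]_K) (x y : V).

(* Phi lam v = lam_0 + ... + lam_{t v - 1}: the position of v in the target
   line when the gaps between consecutive levels are lam. *)
Definition Phi lam (v : V) : R := \sum_(i < K) lam 0 i * (nat_of_bool (i < t v)%N)%:R.

Lemma Phi_eq lam x y : t x = t y -> Phi lam x = Phi lam y.
Proof. by move=> h; rewrite /Phi h. Qed.

Lemma Phi_diff lam x y :
  Phi lam y - Phi lam x =
  \sum_(i < K) lam 0 i * ((nat_of_bool (i < t y)%N)%:R - (nat_of_bool (i < t x)%N)%:R).
Proof. by rewrite /Phi -sumrB; apply: eq_bigr => i _; rewrite mulrBr. Qed.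

Lemma Phi_mono lam x y :
  (forall i, 0 <= lam 0 i) -> (t x <= t y)%N -> Phi lam x <= Phi lam y.
Proof.
move=> h0 hxy; apply: ler_sum => i _; apply: ler_wpM2l => //.
by rewrite ler_nat; case: (i < t x)%N/idP => //= hi; rewrite (leq_trans hi hxy).
Qed.

Lemma Phi_strict lam x y :
  (forall i, 0 < lam 0 i) -> (t x < t y)%N -> (t y <= K)%N -> Phi lam x < Phi lam y.
Proof.
move=> h0 hxy hyK; have hxK : (t x < K)%N by apply: leq_trans hyK.
rewrite -subr_gt0 Phi_diff (bigD1 (Ordinal hxK)) //= hxy ltnn subr0 mulr1.
have : 0 <= \sum_(i < K | i != Ordinal hxK)
   lam 0 i * ((nat_of_bool (i < t y)%N)%:R - (nat_of_bool (i < t x)%N)%:R).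
  apply: sumr_ge0 => i _; apply: mulr_ge0; first exact: ltW.
  rewrite subr_ge0 ler_nat; case: (i < t x)%N/idP => //= hi.
  by rewrite (ltn_trans hi hxy).
by have := h0 (Ordinal hxK); lra.
Qed.

Lemma Phi_order lam : (forall i, 0 < lam 0 i) -> (forall v, t v <= K)%N ->
  forall x y, (Phi lam x < Phi lam y) = (t x < t y)%N.
Proof.
move=> hl hK x y; apply/idP/idP => h; last exact: Phi_strict.
rewrite ltnNge; apply/negP => h'.
by have := Phi_mono (fun i => ltW (hl i)) h'; rewrite leNgt h.
Qed.

Lemma Phi_step lam x y (i : 'I_K) :
  t x = i :> nat -> t y = i.+1 -> Phi lam y - Phi lam x = lam 0 i.
Proof.
move=> hx hy; rewrite Phi_diff hx hy (bigD1 i) //= ltnSn ltnn subr0 mulr1.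
rewrite big1 ?addr0 // => j hj; rewrite ltnS leq_eqVlt.
have -> : (nat_of_ord j == nat_of_ord i) = false by apply/negbTE.
by rewrite subrr mulr0.
Qed.

Lemma Phi_telescope (f : nat -> R) v : (t v <= K)%N ->
  Phi (\row_(i < K) (f i.+1 - f i)) v = f (t v) - f 0%N.
Proof.
by move=> hv; rewrite /Phi -(telescope_prefix f hv); apply: eq_bigr => i _; rewrite mxE.
Qed.

Definition flat_edges : {set 'I_m} := [set e | s e == 0].

(* Rows indexed by gaps: the length of edge e as a function of the gaps. *)
Definition gap_rows : 'M[R]_(K, m) :=
  \matrix_(i < K, e < m) (if s e == 0 then 0 else
     ((nat_of_bool (i < t (tgt e))%N)%:R - (nat_of_bool (i < t (src e))%N)%:R) / (s e)%:~R).

(* Rows indexed by flat edges: the length of a flat edge is a free coordinate. *)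
Definition flat_rows : 'M[R]_(#|flat_edges|, m) :=
  \matrix_(r, e) (nat_of_bool (enum_val r == e))%:R.

Definition generators : 'M[R]_(K + #|flat_edges|, m) := col_mx gap_rows flat_rows.

Lemma generators_flat lam (l : 'rV[R]_#|flat_edges|) e (he : e \in flat_edges) :
  (row_mx lam l *m generators) 0 e = l 0 (enum_rank_in he e).
Proof.
have /eqP se0 : s e == 0 by rewrite inE in he.
rewrite mul_row_col mxE [X in X + _]mxE big1 ?add0r => [|i _]; last by rewrite !mxE se0 eqxx mulr0.
rewrite mxE (bigD1 (enum_rank_in he e)) //= mxE enum_rankK_in // eqxx mulr1.
rewrite big1 ?addr0 // => r hr; rewrite mxE.
case: eqP => [E|]; last by rewrite mulr0.
by have := enum_valK_in he r; rewrite E => h; rewrite h eqxx in hr.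
Qed.

Lemma generators_slope lam (l : 'rV[R]_#|flat_edges|) e : s e != 0 ->
  (row_mx lam l *m generators) 0 e = (Phi lam (tgt e) - Phi lam (src e)) / (s e)%:~R.
Proof.
move=> se0; rewrite mul_row_col mxE [X in _ + X]mxE big1 ?addr0 => [|r _].
  rewrite mxE Phi_diff mulr_suml; apply: eq_bigr => i _.
  by rewrite mxE (negbTE se0) mulrA.
rewrite mxE; case: eqP => [E|]; last by rewrite mulr0.
by move: se0; rewrite -E; have := enum_valP r; rewrite inE => ->.
Qed.

(* Row-freeness: a vanishing combination has zero flat part, and its gap part
   gives a Phi that is constant along every edge, hence (G being connected)
   constant; since every level is attained, all the gaps vanish. *)
Lemma generators_row_free :
  (forall u w, connect (Defs.adjacent src tgt) u w) ->
  (forall j, j <= K -> exists u, t u = j)%N ->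
  (forall e, s e = 0 -> t (tgt e) = t (src e)) ->
  row_free generators.
Proof.
move=> hconn hlevels hflat; apply: inj_row_free => v hv.
rewrite -(hsubmxK v) in hv *; set lam := lsubmx v in hv *; set l := rsubmx v in hv *.
have hl : l = 0.
  apply/rowP => r; have he := enum_valP r.
  by move/rowP/(_ (enum_val r)): hv; rewrite generators_flat enum_valK_in !mxE.
have hedge e : Phi lam (tgt e) = Phi lam (src e).
  have [h|se0] := eqVneq (s e) 0; first exact/Phi_eq/hflat.
  move/rowP/(_ e): hv; rewrite generators_slope // mxE.
  by move/eqP; rewrite mulf_eq0 invr_eq0 intr_eq0 (negbTE se0) orbF subr_eq0 => /eqP.
have hconst u w : Phi lam u = Phi lam w.
  have /connectP [p pth ->] := hconn u w.
  elim: p u pth => //= x p IH u /andP [adj pth]; rewrite -(IH x pth).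
  by case/existsP: adj => e /orP [] /andP [/eqP <- /eqP <-]; rewrite hedge.
have hlam : lam = 0.
  apply/rowP => i; rewrite [RHS]mxE.
  have [u hu] := hlevels i (ltnW (ltn_ord i)); have [w hw] := hlevels i.+1 (ltn_ord i).
  by rewrite -(Phi_step lam hu hw) (hconst w u) subrr.
by rewrite hlam hl row_mx0.
Qed.

End Generators.

Lemma same_order_sign (V : finType) (R : realType) (F G : V -> R) (c : R) x y :
  (forall u w, (F u < F w) = (G u < G w)) ->
  0 < (F y - F x) * c -> 0 < (G y - G x) * c.
Proof.
move=> H; case: (ltgtP (F x) (F y)) => hF.
- have hG : G x < G y by rewrite -H.
  by rewrite !pmulr_rgt0 ?subr_gt0.
- have hG : G y < G x by rewrite -H.
  by rewrite !nmulr_rgt0 ?subr_lt0.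
- by rewrite hF subrr mul0r ltxx.
Qed.

Section RubberCone.
Variables (V : finType) (m n : nat) (R : realType).
Variables (src tgt : 'I_m -> V) (leg : 'I_n -> V) (Vc : 'I_n -> int).
Variables (t : V -> nat) (s : 'I_m -> int).
Hypothesis nonempty : (0 < #|V|)%N.

Variables (p0 : 'rV[R]_m) (F0 : V -> R).
Hypothesis p0_interior : interior_pt p0.
Hypothesis F0_balanced : balanced src tgt leg Vc p0 F0 s.
Hypothesis F0_levels : forall v, level F0 v = t v.

Local Notation K := (\max_(v : V) t v)%N.
Local Notation M := (@generators V R m K src tgt t s).
Local Notation locus := (DR_type_locus src tgt leg Vc (t, s) : set 'rV[R]_m).

(* K is the top level, and every level 0..K is attained (by F0, levels form
   an initial segment). *)
Lemma below_top v : (t v <= K)%N.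
Proof. exact: leq_bigmax. Qed.

Lemma levels_attained j : (j <= K)%N -> exists u, t u = j.
Proof.
have [w0 ->] := bigop.eq_bigmax t nonempty; rewrite -F0_levels => /level_down [u hu].
by exists u; rewrite -F0_levels.
Qed.

Lemma realization_order (F : V -> R) :
  (forall v, level F v = t v) -> forall u w, (F u < F w) = (t u < t w)%N.
Proof. by move=> hF u w; rewrite level_ltP !hF. Qed.

Lemma flat_edge_level e : s e = 0 -> t (tgt e) = t (src e).
Proof.
move=> h; apply/eqP; rewrite -(same_order_eq (realization_order F0_levels)).
by rewrite -subr_eq0 F0_balanced.1 h mul0r.
Qed.

Lemma generators_free (hconn : forall u w, connect (Defs.adjacent src tgt) u w) : row_free M.
Proof. exact: generators_row_free hconn levels_attained flat_edge_level. Qed.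

(* Positive coordinates give a point of the locus: the function Phi of the
   gaps realizes the levels, every edge gets a positive length (with the sign
   read off from F0), and the balancing condition does not involve p. *)
Lemma positive_in_locus (mu : 'rV[R]_(K + #|flat_edges s|)) :
  (forall i, 0 < mu 0 i) -> locus (mu *m M).
Proof.
rewrite -(hsubmxK mu); set lam := lsubmx mu; set l := rsubmx mu => hmu.
have hlam i : 0 < lam 0 i by have := hmu (lshift _ i); rewrite row_mxEl.
have hl r : 0 < l 0 r by have := hmu (rshift _ r); rewrite row_mxEr.
have ordPhi := Phi_order hlam below_top.
have ordF0 := realization_order F0_levels.
split; last exists (Phi t lam), s; [|split; [split|split]] => //.
- move=> e; have [h|se0] := eqVneq (s e) 0.
    have he : e \in flat_edges s by rewrite inE h.
    by rewrite generators_flat.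
  rewrite generators_slope //; apply: (@same_order_sign _ _ F0) => [u w|].
    by rewrite ordF0 ordPhi.
  by rewrite F0_balanced.1 mulrAC divff ?mul1r ?intr_eq0 //; apply: p0_interior.
- move=> e; have [h|se0] := eqVneq (s e) 0.
    by rewrite h mul0r; apply/eqP; rewrite subr_eq0; apply/eqP/Phi_eq/flat_edge_level.
  by rewrite generators_slope // mulrC divfK // intr_eq0.
- exact: F0_balanced.2.
- by move=> v /=; rewrite -F0_levels; apply: level_same_order => u w; rewrite ordPhi ordF0.
Qed.

(* Every point of the locus lies in the cone: its coordinates are the gaps
   between consecutive levels of its balanced function and the lengths of
   its flat edges. *)
Lemma locus_in_cone : locus `<=` cone M.
Proof.
move=> p [hp [F [sl [[hedge _] [hlev hsl]]]]].
have {sl hsl}hedge e : F (tgt e) - F (src e) = (s e)%:~R * p 0 e.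
  by rewrite hedge hsl.
have ordF := realization_order hlev.
pose phi j := if [pick u | t u == j] is Some u then F u else 0.
have hphi v : phi (t v) = F v.
  rewrite /phi; case: pickP => [u /eqP hu|/(_ v)]; last by rewrite eqxx.
  by apply/eqP; rewrite (same_order_eq ordF) hu.
pose lam := \row_(i < K) (phi i.+1 - phi i).
exists (row_mx lam (\row_r p 0 (enum_val r))); split.
  move=> i; rewrite mxE; case: splitP => j _; rewrite mxE; last exact/ltW/hp.
  have [u hu] := levels_attained (ltnW (ltn_ord j)).
  have [w hw] := levels_attained (ltn_ord j).
  by rewrite -hw -hu !hphi subr_ge0 ltW // ordF hu hw.
apply/rowP => e; have [h|se0] := eqVneq (s e) 0.
  have he : e \in flat_edges s by rewrite inE h.
  by rewrite generators_flat mxE enum_rankK_in.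
rewrite generators_slope // !Phi_telescope ?below_top // !hphi.
by rewrite opprB addrA subrK hedge mulrC mulKf // intr_eq0.
Qed.

End RubberCone.

Theorem mainTheorem11 (R : realType) (g n : nat) (Vc : 'I_n -> int)
  (V : finType) (m : nat) (gw : V -> nat)
  (src tgt : 'I_m -> V) (leg : 'I_n -> V) :
  stable_graph src tgt leg g gw ->
  forall tau : rubber_type V m,
  (DR_type_locus src tgt leg Vc tau : set 'rV[R]_m) !=set0 ->
  simplicial_cone (topology_structure.closure (DR_type_locus src tgt leg Vc tau : set 'rV[R]_m)).
Proof.
move=> [nonempty hconn _ _] [t s] [p0 [hp0 [F0 [s0 [hbal0 [hlev0 hs0]]]]]].
have {s0 hs0} hbal0 : balanced src tgt leg Vc p0 F0 s by have <- : s0 = s by apply: funext.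
have Mfree := generators_free nonempty hbal0 hlev0 hconn.
do 2 eexists; split; first exact: Mfree.
apply: closure_between_cone Mfree _ _.
- exact: positive_in_locus hp0 hbal0 hlev0.
- exact: (locus_in_cone (t := t) (s := s) nonempty hlev0).
Qed.
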